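(* Let $n\ge 1$, let $\mathcal M$ be a doubly stochastic $n\times n$ matrix and let $\kappa\le\frac{7n-4}{8n-4}$. Then there exists a directed $(2n-1)$-regular multigraph on $[n]$ whose weak direct throughput with respect to $\mathcal M$ is at least $\kappa$.
   Context: Let $n\ge 1$ and $[n]=\{1,\dots,n\}$. Networks are finite directed multigraphs on vertex set $[n]$; self-loops and parallel arcs are allowed. A directed multigraph is directed $r$-regular if every vertex has exactly $r$ outgoing and exactly $r$ incoming arcs (a self-loop at $v$ counts as one outgoing and one incoming arc of $v$). An $n\times n$ matrix is doubly stochastic if all entries are nonnegative and every row and every column sums to $1$. In a directed $(2n-1)$-regular multigraph $G$ on $[n]$ every arc has capacity $\frac{1}{2n-1}$. $G$ directly hosts a nonnegative $n\times n$ matrix $\mathcal M'=(a'_{i,j})$ if $a'_{u,v}\le \frac{m_{u,v}}{2n-1}$ for all $u,v\in[n]$, where $m_{u,v}$ is the number of arcs from $u$ to $v$ in $G$. The weak direct throughput of $G$ with respect to a doubly stochastic $\mathcal M=(a_{i,j})$ is the largest $\eta$ such that $G$ directly hosts some matrix $\mathcal M'=(a'_{i,j})$ with $0\le a'_{i,j}\le a_{i,j}$ for all $i,j$ and $\sum_{i,j}a'_{i,j}=\eta\sum_{i,j}a_{i,j}=\eta n$. *)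

From HB Require Import structures.
From mathcomp Require Import all_boot all_order all_algebra.
From mathcomp Require Import classical_sets reals.
Set Implicit Arguments. Unset Strict Implicit. Unset Printing Implicit Defensive.
Import Order.TTheory GRing.Theory Num.Theory.
Local Open Scope ring_scope.

(* A finite directed multigraph on [n] (self-loops and parallel arcs allowed)
   is given by its arc multiplicities: [m u v] = number of arcs from u to v.
   Vertex set [n] = {1..n} is represented by 'I_n = {0..n-1}. *)
Definition multigraph (n : nat) := 'I_n -> 'I_n -> nat.

(* directed r-regular: every vertex has r outgoing and r incoming arcs
   (a self-loop at v counts once in the out-degree and once in the in-degree). *)
Definition directed_regular (n : nat) (G : multigraph n) (r : nat) : Prop :=
  (forall u : 'I_n, (\sum_(v < n) G u v)%N = r) /\
  (forall v : 'I_n, (\sum_(u < n) G u v)%N = r).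

Definition doubly_stochastic (R : realType) (n : nat) (M : 'M[R]_n) : Prop :=
  (forall i j, 0 <= M i j) /\
  (forall i, \sum_(j < n) M i j = 1) /\
  (forall j, \sum_(i < n) M i j = 1).

(* Each arc has capacity 1/(2n-1); G directly hosts M' iff
   M'_{u,v} <= m_{u,v} / (2n-1). *)
Definition directly_hosts (R : realType) (n : nat) (G : multigraph n)
    (M' : 'M[R]_n) : Prop :=
  forall u v : 'I_n, M' u v <= (G u v)%:R / (2 * n%:R - 1).

Definition wdt_feasible (R : realType) (n : nat) (G : multigraph n)
    (M : 'M[R]_n) (eta : R) : Prop :=
  exists M' : 'M[R]_n,
    (forall i j, 0 <= M' i j /\ M' i j <= M i j) /\
    directly_hosts G M' /\
    \sum_(i < n) \sum_(j < n) M' i j = eta * \sum_(i < n) \sum_(j < n) M i j.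

(* The weak direct throughput: the largest achievable eta (taken as the
   supremum of the achievable set, which is attained). *)
Definition weak_direct_throughput (R : realType) (n : nat) (G : multigraph n)
    (M : 'M[R]_n) : R :=
  sup [set eta | wdt_feasible G M eta].

From HB Require Import structures.
From mathcomp Require Import all_boot all_order all_algebra.
From mathcomp Require Import reals.
From mathcomp Require Import zify ring lra.
Set Implicit Arguments. Unset Strict Implicit. Unset Printing Implicit Defensive.
Import Order.TTheory GRing.Theory Num.Theory.
Local Open Scope ring_scope.

(* Scale M by 2n-1 and split each entry into its floor and its fractional part
   p in [0, 1). The fractional parts have integral row and column sums, so they
   can be rounded to a 0/1 matrix B with the same margins and <P, B> >= <P, P>:
   while some entry is fractional, the fractional entries carry a nonzero
   circulation, and moving along it in the direction that does not decrease
   <P, .> eventually makes one more entry integral. The graph with floor + B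
   arcs between u and v is (2n-1)-regular; it serves the demand fully where B
   rounds up and only the floor elsewhere, so the scaled demand lost is
   sum p (1 - p) - <P, B - P> <= n^2/4 out of n(2n-1), i.e. the throughput is
   at least 1 - n / (4(2n-1)) = (7n-4)/(8n-4). *)

Lemma underdetermined_system_nontrivial (F : fieldType) (T U : finType)
    (A : {set T}) (B : {set U}) (a : T -> U -> F) :
  (#|B| < #|A|)%N ->
  exists x : T -> F, [/\ forall t, t \notin A -> x t = 0, exists t, x t != 0
    & forall u, u \in B -> \sum_(t in A) x t * a t u = 0].
Proof.
move=> ltBA; have [t0 t0A] : exists t0, t0 \in A.
  by apply/set0Pn; rewrite -card_gt0; apply: leq_ltn_trans ltBA.
pose Am : 'M[F]_(#|A|, #|B|) := \matrix_(i, j) a (enum_val i) (enum_val j).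
have /rowV0Pn [v /sub_kermxP vAm v0] : kermx Am != 0.
  rewrite kermx_eq0 /row_free neq_ltn; apply/orP; left.
  exact: leq_ltn_trans (rank_leq_col Am) ltBA.
case/rV0Pn: v0 => k vk.
exists (fun t => if t \in A then v 0 (enum_rank_in t0A t) else 0); split.
- by move=> t /negbTE ->.
- by exists (enum_val k); rewrite enum_valP enum_valK_in.
- move=> u uB; have := congr1 (fun w : 'rV_#|B| => w 0 (enum_rank_in uB u)) vAm.
  rewrite !mxE => vAm_u; rewrite big_enum_val -[RHS]vAm_u /=.
  apply: eq_bigr => i _; rewrite enum_valP enum_valK_in mxE enum_rankK_in //.
Qed.

Lemma leq_double_imset_card (T U : finType) (f : T -> U) (S : {set T}) :
  (forall t, t \in S -> exists2 t', t' \in S & f t' = f t /\ t' != t) ->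
  (2 * #|f @: S| <= #|S|)%N.
Proof.
move=> fiber2; rewrite -[X in (_ <= X)%N]sum1_card.
rewrite (partition_big f (fun u => u \in f @: S)) /=; last first.
  by move=> t tS; apply: imset_f.
rewrite mulnC -sum_nat_const; apply: leq_sum => _ /imsetP[t tS ->].
rewrite sum1_card; apply/card_gt1P; have [t' t'S [ft't t't]] := fiber2 t tS.
exists t, t'; split; last by rewrite eq_sym.
all: by rewrite unfold_in /= ?tS ?t'S ?ft't eqxx.
Qed.

Section Rounding.
Variables (R : realFieldType) (n : nat).
Implicit Types (W Z C : 'M[R]_n) (x z c tau : R).

Definition fractional x := (0 < x) && (x < 1).

Definition frac_support Z := [set t : 'I_n * 'I_n | fractional (Z t.1 t.2)].

Definition unit_bounded Z := forall i j, 0 <= Z i j <= 1.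

Definition nat_margins Z :=
  (forall i, exists s : nat, \sum_j Z i j = s%:R) /\
  (forall j, exists s : nat, \sum_i Z i j = s%:R).

Definition same_margins Z Z' :=
  (forall i, \sum_j Z' i j = \sum_j Z i j) /\
  (forall j, \sum_i Z' i j = \sum_i Z i j).

Definition circulation C :=
  (forall i, \sum_j C i j = 0) /\ (forall j, \sum_i C i j = 0).

Definition mxdot W Z := \sum_i \sum_j W i j * Z i j.

Lemma nonfractional_unitE x : 0 <= x <= 1 -> ~~ fractional x -> x = (x == 1)%:R.
Proof.
case/andP=> x0 x1; rewrite /fractional negb_and -!leNgt.
by case: eqP => [->//|/eqP x_neq1] /orP[x_le0|]; [apply/eqP; rewrite eq_le x_le0 | lra].
Qed.

Lemma nat_sub_nonfractional (s k : nat) : ~~ fractional (s%:R - k%:R).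
Proof.
apply/andP=> -[gt0 lt1].
have : (k < s)%N by rewrite -(ltr_nat R); lra.
have : (s < k.+1)%N by rewrite -(ltr_nat R) -addn1 natrD; lra.
lia.
Qed.

Lemma row_frac_partner Z i j0 :
  unit_bounded Z -> (exists s : nat, \sum_j Z i j = s%:R) ->
  fractional (Z i j0) -> exists2 j1, j1 != j0 & fractional (Z i j1).
Proof.
move=> Zb [s rowZ] fracZ.
case: (pickP [pred j1 | (j1 != j0) && fractional (Z i j1)]) => [j1 /andP[]|none].
  by exists j1.
have others : \sum_(j | j != j0) Z i j = (\sum_(j | j != j0) (Z i j == 1%R))%N%:R.
  rewrite natr_sum; apply: eq_bigr => j j_neq0; apply: nonfractional_unitE => //.
  by move: (none j); rewrite /= j_neq0 => /negbT.
rewrite (bigD1 j0) //= others in rowZ.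
have := nat_sub_nonfractional s (\sum_(j | j != j0) (Z i j == 1%R))%N.
by rewrite -rowZ addrK fracZ.
Qed.

Lemma col_frac_partner Z i0 j :
  unit_bounded Z -> (exists s : nat, \sum_i Z i j = s%:R) ->
  fractional (Z i0 j) -> exists2 i1, i1 != i0 & fractional (Z i1 j).
Proof.
move=> Zb [s colZ] fracZ.
have ZTb : unit_bounded Z^T by move=> ? ?; rewrite mxE.
have rowZT : exists s : nat, \sum_k Z^T j k = s%:R.
  by exists s; rewrite -colZ; apply: eq_bigr => k _; rewrite mxE.
have fracZT : fractional (Z^T j i0) by rewrite mxE.
have [i1 i1_neq0] := row_frac_partner ZTb rowZT fracZT.
by rewrite mxE; exists i1.
Qed.

Lemma frac_rows_card Z : unit_bounded Z -> nat_margins Z ->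
  (2 * #|[set t.1 | t in frac_support Z]| <= #|frac_support Z|)%N.
Proof.
move=> Zb [rowZ _]; apply: leq_double_imset_card => -[i j]; rewrite inE /= => fracZ.
have [j1 j1_neqj fracZ1] := row_frac_partner Zb (rowZ i) fracZ.
by exists (i, j1); rewrite ?inE //; split=> //; apply: contra j1_neqj => /eqP[->].
Qed.

Lemma frac_cols_card Z : unit_bounded Z -> nat_margins Z ->
  (2 * #|[set t.2 | t in frac_support Z]| <= #|frac_support Z|)%N.
Proof.
move=> Zb [_ colZ]; apply: leq_double_imset_card => -[i j]; rewrite inE /= => fracZ.
have [i1 i1_neqi fracZ1] := col_frac_partner Zb (colZ j) fracZ.
by exists (i1, j); rewrite ?inE //; split=> //; apply: contra i1_neqi => /eqP[->].
Qed.

Lemma redundant_col_sum C j0 :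
  (forall i, \sum_j C i j = 0) -> (forall j, j != j0 -> \sum_i C i j = 0) ->
  \sum_i C i j0 = 0.
Proof.
move=> rowC colC; have : \sum_j \sum_i C i j = 0 by rewrite exchange_big big1.
by rewrite (bigD1 j0) //= [X in _ + X]big1 ?addr0.
Qed.

Lemma exists_frac_circulation Z :
  unit_bounded Z -> nat_margins Z -> frac_support Z != set0 ->
  exists C, [/\ C != 0, forall i j, (i, j) \notin frac_support Z -> C i j = 0
    & circulation C].
Proof.
move=> Zb Zm /set0Pn[t0 t0S]; set S := frac_support Z.
pose rows := [set t.1 | t in S]; pose cols := [set t.2 | t in S].
pose eqs : {set 'I_n + 'I_n} := inl @: rows :|: inr @: (cols :\ t0.2).
pose a (t : 'I_n * 'I_n) (e : 'I_n + 'I_n) : R :=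
  match e with inl i => (t.1 == i)%:R | inr j => (t.2 == j)%:R end.
(* Every fractional row and column holds two fractional entries, and one column
   equation is implied by the others, so there are fewer equations than unknowns. *)
have card_eqs : (#|eqs| < #|S|)%N.
  have t0cols : t0.2 \in cols by apply: imset_f.
  have := cardsD1 t0.2 cols; rewrite t0cols.
  move: (frac_rows_card Zb Zm) (frac_cols_card Zb Zm); rewrite -/S -/rows -/cols.
  have inl_inj : injective (@inl 'I_n 'I_n) by move=> ? ? [].
  have inr_inj : injective (@inr 'I_n 'I_n) by move=> ? ? [].
  rewrite cardsU (card_imset _ inl_inj) (card_imset _ inr_inj); lia.
have [x [xS [t xt] xeqs]] := underdetermined_system_nontrivial a card_eqs.
pose C : 'M[R]_n := \matrix_(i, j) x (i, j).
have CS i j : (i, j) \notin S -> C i j = 0 by move=> ijS; rewrite mxE xS.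
have sumS g : \sum_(t in S) x t * g t = \sum_i \sum_j C i j * g (i, j).
  rewrite pair_big /= big_mkcond /=; apply: eq_bigr => -[i j] _ /=.
  by rewrite mxE; case: ifP => // /negbT /xS ->; rewrite mul0r.
have rowC i : \sum_j C i j = 0.
  have [irows|] := boolP (i \in rows); last first.
    move=> irows; apply: big1 => j _; apply: CS.
    by apply: contra irows; apply: imset_f.
  have := xeqs (inl i); rewrite inE imset_f // sumS => /(_ isT).
  rewrite (bigD1 i) //= [X in _ + X]big1 ?addr0 => [|k k_neqi]; last first.
    by apply: big1 => j _; rewrite /a /= (negbTE k_neqi) mulr0.
  by rewrite eqxx; under eq_bigr do rewrite mulr1.
have colC j : j != t0.2 -> \sum_i C i j = 0.
  move=> j_neq0; have [jcols|] := boolP (j \in cols); last first.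
    move=> jcols; apply: big1 => i _; apply: CS.
    by apply: contra jcols; apply: imset_f.
  have := xeqs (inr j); rewrite inE imset_f ?orbT ?inE ?j_neq0 // sumS => /(_ isT).
  rewrite exchange_big (bigD1 j) //= [X in _ + X]big1 ?addr0 => [|k k_neqj].
    by under eq_bigr do rewrite eqxx mulr1.
  by apply: big1 => i _; rewrite /a /= (negbTE k_neqj) mulr0.
exists C; split=> //.
  by apply/matrix0Pn; exists t.1, t.2; rewrite mxE -surjective_pairing.
split=> // j; have [->|] := eqVneq j t0.2; [exact: redundant_col_sum | exact: colC].
Qed.

Definition max_step z c := if 0 < c then (1 - z) / c else - z / c.

Lemma max_step_gt0 z c : fractional z -> c != 0 -> 0 < max_step z c.
Proof.
rewrite /fractional /max_step => /andP[z0 z1] c0; case: ifP => [c_gt0|/negbT].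
  by apply: divr_gt0; lra.
rewrite -leNgt le_eqVlt (negbTE c0) /= => c_lt0.
by rewrite -[c]opprK invrN mulrNN; apply: divr_gt0; lra.
Qed.

Lemma unit_add_step z c tau :
  0 <= z <= 1 -> 0 <= tau <= max_step z c -> 0 <= z + tau * c <= 1.
Proof.
rewrite /max_step => /andP[z0 z1] /andP[tau0]; case: ifP => [c_gt0|/negbT].
  rewrite ler_pdivlMr // => tau_le; have : 0 <= tau * c by apply: mulr_ge0; lra.
  by move=> ?; apply/andP; split; lra.
rewrite -leNgt le_eqVlt => /orP[/eqP->|c_lt0]; first by rewrite mulr0 addr0 z0 z1.
rewrite ler_ndivlMr // => tau_le; have : tau * c <= 0 by apply: mulr_ge0_le0; lra.
by move=> ?; apply/andP; split; lra.
Qed.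

Lemma add_max_step_nonfractional z c :
  c != 0 -> ~~ fractional (z + max_step z c * c).
Proof.
rewrite /max_step /fractional => c0; case: ifP => _; rewrite divfK //.
  by rewrite addrC subrK ltxx andbF.
by rewrite addrN ltxx.
Qed.

Lemma mxdotDZr W Z C tau : mxdot W (Z + tau *: C) = mxdot W Z + tau * mxdot W C.
Proof.
rewrite /mxdot mulr_sumr -big_split; apply: eq_bigr => i _ /=.
rewrite mulr_sumr -big_split; apply: eq_bigr => j _ /=; rewrite !mxE; ring.
Qed.

Lemma mxdotZr W C tau : mxdot W (tau *: C) = tau * mxdot W C.
Proof.
rewrite /mxdot mulr_sumr; apply: eq_bigr => i _.
rewrite mulr_sumr; apply: eq_bigr => j _; rewrite mxE; ring.
Qed.

Lemma circulationZ C tau : circulation C -> circulation (tau *: C).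
Proof.
case=> rowC colC; split=> k; under eq_bigr do rewrite mxE.
  by rewrite -mulr_sumr rowC mulr0.
by rewrite -mulr_sumr colC mulr0.
Qed.

Lemma same_margins_addr Z C : circulation C -> same_margins Z (Z + C).
Proof.
case=> rowC colC; split=> k; under eq_bigr do rewrite mxE.
  by rewrite big_split /= rowC addr0.
by rewrite big_split /= colC addr0.
Qed.

Lemma same_margins_trans Z1 Z2 Z3 :
  same_margins Z1 Z2 -> same_margins Z2 Z3 -> same_margins Z1 Z3.
Proof. by move=> [r12 c12] [r23 c23]; split=> k; rewrite ?r23 ?c23. Qed.

Lemma nat_margins_same Z Z' : nat_margins Z -> same_margins Z Z' -> nat_margins Z'.
Proof. by move=> [rowZ colZ] [rowZ' colZ']; split=> k; rewrite ?rowZ' ?colZ'. Qed.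

Lemma frac_support_shrinks Z C :
  unit_bounded Z -> C != 0 ->
  (forall i j, (i, j) \notin frac_support Z -> C i j = 0) ->
  exists2 tau, 0 < tau &
    unit_bounded (Z + tau *: C) /\ frac_support (Z + tau *: C) \proper frac_support Z.
Proof.
move=> Zb /matrix0Pn[i0 [j0 Cij0]] CS.
have nzS t : C t.1 t.2 != 0 -> t \in frac_support Z.
  by case: t => i j /= Cij; apply: contraR Cij => /CS ->.
pose nz := [pred t : 'I_n * 'I_n | C t.1 t.2 != 0].
have nz0 : (i0, j0) \in nz by [].
(* The smallest max_step over the support keeps every entry in [0, 1] and makes
   the entry tm attaining it integral. *)
have [tm tm_nz tm_min] := arg_minP (fun t => max_step (Z t.1 t.2) (C t.1 t.2)) nz0.
have tm_frac : fractional (Z tm.1 tm.2) by have := nzS tm tm_nz; rewrite inE.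
have tau_gt0 := max_step_gt0 tm_frac tm_nz.
exists (max_step (Z tm.1 tm.2) (C tm.1 tm.2)) => //; split.
  move=> i j; rewrite !mxE; have [->|Cij] := eqVneq (C i j) 0.
    by rewrite mulr0 addr0.
  by apply: unit_add_step; rewrite ?Zb // ltW //=; apply: (tm_min (i, j)).
apply/properP; split.
  apply/subsetP => -[i j]; rewrite !inE !mxE /=; have [->|Cij] := eqVneq (C i j) 0.
    by rewrite mulr0 addr0.
  by move=> _; have := nzS (i, j) Cij; rewrite inE.
by exists tm; [exact: nzS | rewrite inE !mxE add_max_step_nonfractional].
Qed.

Lemma round_step W Z :
  unit_bounded Z -> nat_margins Z -> frac_support Z != set0 ->
  exists Z', [/\ unit_bounded Z', same_margins Z Z',
    frac_support Z' \proper frac_support Z & mxdot W Z <= mxdot W Z'].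
Proof.
move=> Zb Zm Zfrac; have [C [C0 CS circC]] := exists_frac_circulation Zb Zm Zfrac.
wlog CW : C C0 CS circC / 0 <= mxdot W C.
  move=> step; have [|CW] := lerP 0 (mxdot W C); first exact: step.
  apply: (step (- 1 *: C)).
  - by rewrite scaler_eq0 negb_or oppr_eq0 oner_eq0.
  - by move=> i j /CS; rewrite mxE => ->; rewrite mulr0.
  - exact: circulationZ.
  - by rewrite mxdotZr mulN1r oppr_ge0 ltW.
have [tau tau_gt0 [Z'b Z'frac]] := frac_support_shrinks Zb C0 CS.
exists (Z + tau *: C); split=> //; first exact/same_margins_addr/circulationZ.
by rewrite mxdotDZr lerDl; apply: mulr_ge0 (ltW tau_gt0) CW.
Qed.

Lemma frac_free_01 Z : unit_bounded Z -> frac_support Z = set0 ->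
  forall i j, Z i j = 0 \/ Z i j = 1.
Proof.
move=> Zb Z0 i j; have : (i, j) \notin frac_support Z by rewrite Z0 inE.
rewrite inE => /(nonfractional_unitE (Zb i j)) ->.
by case: (_ == 1); [right | left].
Qed.

Theorem bipartite_rounding W Z : unit_bounded Z -> nat_margins Z ->
  exists B : 'M[R]_n, [/\ forall i j, B i j = 0 \/ B i j = 1, same_margins Z B
    & mxdot W Z <= mxdot W B].
Proof.
elim: {Z}_.+1 {-2}Z (ltnSn #|frac_support Z|) => // N IH Z ltZN Zb Zm.
have [Z0|Zfrac] := eqVneq (frac_support Z) set0.
  by exists Z; split=> //; apply: frac_free_01.
have [Z' [Z'b ZZ' Z'sub dotZ']] := round_step W Zb Zm Zfrac.
have ltZ'N : (#|frac_support Z'| < N)%N.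
  by rewrite -ltnS; apply: leq_trans ltZN; apply: proper_card.
have [B [B01 Z'B dotB]] := IH Z' ltZ'N Z'b (nat_margins_same Zm ZZ').
by exists B; split=> //; [apply: same_margins_trans Z'B | apply: le_trans dotB].
Qed.

End Rounding.

Lemma sum_sub_truncn (R : archiNumDomainType) (I : finType) (x : I -> R) (k : nat) :
  (forall i, 0 <= x i) -> \sum_i x i = k%:R ->
  \sum_i (x i - (Num.truncn (x i))%:R) = (k - \sum_i Num.truncn (x i))%N%:R.
Proof.
move=> x_ge0 sumx; have le_k : (\sum_i Num.truncn (x i) <= k)%N.
  by rewrite -(ler_nat R) natr_sum -sumx; apply: ler_sum => i _; rewrite truncn_le.
by rewrite natrB // natr_sum sumrB sumx.
Qed.

Lemma sum_sub_mxdot_self_le (R : realFieldType) n (P : 'M[R]_n) :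
  \sum_i \sum_j P i j - mxdot P P <= n%:R * n%:R / 4.
Proof.
have -> : n%:R * n%:R / 4 = \sum_(i < n) \sum_(j < n) (1 / 4 : R).
  by rewrite !sumr_const card_ord -mulr_natr -mulr_natr; field.
rewrite /mxdot -sumrB; apply: ler_sum => i _; rewrite -sumrB; apply: ler_sum => j _.
by have := sqr_ge0 (P i j - 1 / 2); lra.
Qed.

Lemma weak_direct_throughput_ge (R : realType) n (G : multigraph n)
    (M : 'M[R]_n) eta :
  (0 < n)%N -> doubly_stochastic M -> wdt_feasible G M eta ->
  eta <= weak_direct_throughput G M.
Proof.
move=> n_gt0 [_ [rowM _]] feas; apply: sup_upper_bound => //.
split; first by exists eta.
have sumM : \sum_i \sum_j M i j = n%:R.
  by under eq_bigr do rewrite rowM; rewrite sumr_const card_ord.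
have n_pos : 0 < n%:R :> R by rewrite ltr0n.
exists 1 => e [M' [M'M [_ sumM']]]; rewrite -(ler_pM2r n_pos) mul1r -sumM -sumM'.
by apply: ler_sum => i _; apply: ler_sum => j _; case: (M'M i j).
Qed.

Lemma throughput_ratio_bound (R : realFieldType) (x s : R) : 1 <= x ->
  (2 * x - 1) * x - x * x / 4 <= (2 * x - 1) * s ->
  (7 * x - 4) / (8 * x - 4) <= s / x.
Proof.
move=> x_ge1 bound; have x_gt0 : 0 < x by lra.
have den_gt0 : 0 < 8 * x - 4 by lra.
rewrite ler_pdivlMr // mulrAC ler_pdivrMr //.
have -> : s * (8 * x - 4) = 4 * ((2 * x - 1) * s) by ring.
have -> : (7 * x - 4) * x = 4 * ((2 * x - 1) * x - x * x / 4) by field.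
by rewrite ler_pM2l.
Qed.

Section RoundedGraph.
Variables (R : realType) (n : nat) (M : 'M[R]_n).
Hypotheses (n_gt0 : (0 < n)%N) (Mds : doubly_stochastic M).

Local Notation c := (2 * n%:R - 1 : R).

Definition scaled_floor (i j : 'I_n) : nat := Num.truncn (c * M i j).

Definition scaled_frac : 'M[R]_n :=
  \matrix_(i, j) (c * M i j - (scaled_floor i j)%:R).

Lemma scaled_fracE i j : scaled_frac i j = c * M i j - (scaled_floor i j)%:R.
Proof. by rewrite mxE. Qed.

Lemma scaled_den_nat : c = (2 * n - 1)%N%:R.
Proof. by rewrite natrB ?natrM // muln_gt0. Qed.

Lemma scaled_den_gt0 : 0 < c.
Proof. have : 1 <= n%:R :> R by rewrite ler1n. lra. Qed.

Lemma scaled_ge0 i j : 0 <= c * M i j.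
Proof. by apply: mulr_ge0; [exact/ltW/scaled_den_gt0 | case: Mds]. Qed.

Lemma scaled_floor_bounds i j :
  (scaled_floor i j)%:R <= c * M i j < (scaled_floor i j)%:R + 1.
Proof. by rewrite natr1; apply: truncn_itv; apply: scaled_ge0. Qed.

Lemma scaled_frac_unit_bounded : unit_bounded scaled_frac.
Proof. by move=> i j; rewrite scaled_fracE; have := scaled_floor_bounds i j; lra. Qed.

Lemma scaled_frac_nat_margins : nat_margins scaled_frac.
Proof.
case: Mds => _ [rowM colM]; split=> k.
  exists (2 * n - 1 - \sum_j scaled_floor k j)%N.
  rewrite (eq_bigr _ (fun j _ => scaled_fracE k j)).
  apply: sum_sub_truncn => [j|]; first exact: scaled_ge0.
  by rewrite -mulr_sumr rowM mulr1 scaled_den_nat.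
exists (2 * n - 1 - \sum_i scaled_floor i k)%N.
rewrite (eq_bigr _ (fun i _ => scaled_fracE i k)).
apply: sum_sub_truncn => [i|]; first exact: scaled_ge0.
by rewrite -mulr_sumr colM mulr1 scaled_den_nat.
Qed.

Variable B : 'M[R]_n.
Hypotheses (B01 : forall i j, B i j = 0 \/ B i j = 1)
  (PB : same_margins scaled_frac B).

Definition rounded_graph : multigraph n :=
  fun u v => (scaled_floor u v + (B u v == 1%R))%N.

Definition rounded_demand : 'M[R]_n :=
  \matrix_(u, v) if B u v == 1 then M u v else (scaled_floor u v)%:R / c.

Lemma rounded_graphE u v : (rounded_graph u v)%:R = (scaled_floor u v)%:R + B u v.
Proof. by rewrite natrD; case: (B01 u v) => ->; rewrite ?eqxx // eq_sym oner_eq0. Qed.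

Lemma rounded_graph_regular : directed_regular rounded_graph (2 * n - 1).
Proof.
case: Mds => _ [rowM colM]; case: PB => rowB colB.
split=> k; apply/eqP; rewrite -(eqr_nat R) natr_sum -scaled_den_nat; apply/eqP.
  under eq_bigr do rewrite rounded_graphE.
  have rowX : \sum_j c * M k j = c by rewrite -mulr_sumr rowM mulr1.
  rewrite big_split /= rowB -big_split /= -[RHS]rowX.
  by apply: eq_bigr => j _; rewrite scaled_fracE addrC subrK.
under eq_bigr do rewrite rounded_graphE.
have colX : \sum_i c * M i k = c by rewrite -mulr_sumr colM mulr1.
rewrite big_split /= colB -big_split /= -[RHS]colX.
by apply: eq_bigr => i _; rewrite scaled_fracE addrC subrK.
Qed.

Lemma rounded_demand_bounded i j :
  0 <= rounded_demand i j /\ rounded_demand i j <= M i j.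
Proof.
case: Mds => M_ge0 _; rewrite mxE; case: ifP => // _.
have c_gt0 := scaled_den_gt0; have := scaled_floor_bounds i j.
move=> /andP[F_le _]; split; first exact: divr_ge0 (ltW c_gt0).
by rewrite ler_pdivrMr // mulrC.
Qed.

Lemma rounded_demand_hosted : directly_hosts rounded_graph rounded_demand.
Proof.
move=> u v; have c_gt0 := scaled_den_gt0; rewrite rounded_graphE mxE.
case: (B01 u v) => ->; rewrite ?eqxx; last first.
  by rewrite ler_pdivlMr // mulrC; have := scaled_floor_bounds u v; lra.
by rewrite eq_sym oner_eq0 addr0.
Qed.

Lemma rounded_demand_scaled u v :
  c * rounded_demand u v = c * M u v - scaled_frac u v + scaled_frac u v * B u v.
Proof.
rewrite mxE scaled_fracE; case: (B01 u v) => ->; rewrite ?eqxx; last by ring.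
by rewrite eq_sym oner_eq0 mulr0 addr0 mulrC divfK ?gt_eqF ?scaled_den_gt0 //; ring.
Qed.

Lemma rounded_demand_sum :
  c * \sum_i \sum_j rounded_demand i j =
  c * n%:R - \sum_i \sum_j scaled_frac i j + mxdot scaled_frac B.
Proof.
case: Mds => _ [rowM _].
have -> : c * n%:R = \sum_i \sum_j c * M i j.
  under eq_bigr do rewrite -mulr_sumr rowM mulr1.
  by rewrite sumr_const card_ord mulr_natr.
rewrite /mxdot -sumrB -big_split mulr_sumr; apply: eq_bigr => i _ /=.
rewrite -sumrB -big_split mulr_sumr; apply: eq_bigr => j _.
exact: rounded_demand_scaled.
Qed.

Lemma rounded_feasible :
  wdt_feasible rounded_graph M ((\sum_i \sum_j rounded_demand i j) / n%:R).
Proof.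
case: Mds => _ [rowM _]; exists rounded_demand.
split; [exact: rounded_demand_bounded | split; first exact: rounded_demand_hosted].
have sumM : \sum_(i < n) \sum_(j < n) M i j = n%:R.
  by under eq_bigr do rewrite rowM; rewrite sumr_const card_ord.
by rewrite sumM divfK // pnatr_eq0 -lt0n.
Qed.

End RoundedGraph.

Theorem theorem4p3 (R : realType) (n : nat) (M : 'M[R]_n) (kappa : R) :
  (1 <= n)%N ->
  doubly_stochastic M ->
  kappa <= (7 * n%:R - 4) / (8 * n%:R - 4) ->
  exists G : multigraph n,
    directed_regular G (2 * n - 1)%N /\ kappa <= weak_direct_throughput G M.
Proof.
move=> n_gt0 Mds kappa_le.
have [B [B01 PB dotPB]] := bipartite_rounding (scaled_frac M)
  (scaled_frac_unit_bounded n_gt0 Mds) (scaled_frac_nat_margins n_gt0 Mds).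
exists (rounded_graph M B); split; first exact: rounded_graph_regular.
apply: (le_trans kappa_le).
apply: le_trans (weak_direct_throughput_ge n_gt0 Mds (rounded_feasible n_gt0 Mds B01)).
apply: throughput_ratio_bound; first by rewrite ler1n.
rewrite rounded_demand_sum //.
by have := sum_sub_mxdot_self_le (scaled_frac M); lra.
Qed.
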